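(* Suppose assumption (C) below holds. Fix $k\ge3$ and let $\mathcal U_k$ be the set from (C); for a scalar $T$ (tensor of order $0$) define $\|T\|_{\mathcal U_k}=|T|$. Then for any $\varepsilon>0$ there exists $C\equiv C(\varepsilon,k)>0$ such that for all $i\in[N]$, all $0\le m\le k$, all $\mathbf s_1,\dots,\mathbf s_m\in\mathbb C^n$ and all $T\in(\mathbb C^n)^{\otimes k-m}$, \[|\langle\kappa_k(\mathbf g_i),\mathbf s_1\otimes\cdots\otimes\mathbf s_m\otimes T\rangle|\le Cn^{\varepsilon}(\sqrt n)^{k-m}\|T\|_{\mathcal U_k}\prod_{t=1}^m\|\mathbf s_t\|_2.\]
   Context: $\mathbf g_1,\dots,\mathbf g_N\in\mathbb R^n$ are random vectors with finite moments (indexed by $N$, $n=n(N)$). $\langle\cdot,\cdot\rangle$ denotes the non-conjugate (bilinear) scalar product on $(\mathbb C^n)^{\otimes k}$. $\kappa_k(\mathbf g_i)\in(\mathbb R^n)^{\otimes k}$ is the $k$-th cumulant tensor, with entries the mixed cumulants $\kappa_k(\mathbf e_{\alpha_1}^*\mathbf g_i,\dots,\mathbf e_{\alpha_k}^*\mathbf g_i)$. For $\mathcal U\subseteq\mathbb R^n$ and $T$ of order $k\ge1$, $\|T\|_{\mathcal U}=\sup_{\mathbf x_1,\dots,\mathbf x_k\in\mathcal U}|\langle\mathbf x_1\otimes\cdots\otimes\mathbf x_k,T\rangle|$. (C): for each $k\ge3$ there exist $C_k>0$ and a deterministic $\mathcal U_k\subset\mathbb R^n$ with $\{\mathbf e_1,\dots,\mathbf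 e_n\}\subseteq\mathcal U_k$, $|\mathcal U_k|\le n^{C_k}$, $\|\mathbf x\|_2\le C_k$ for all $\mathbf x\in\mathcal U_k$, such that for any $\varepsilon>0$ there is $C(\varepsilon,k)$ with, for each $i$, $m\in\{1,\dots,k-1\}$, $\mathbf s_1,\dots,\mathbf s_m\in\mathbb R^n$, $T\in(\mathbb R^n)^{\otimes k-m}$: $|\langle\kappa_k(\mathbf g_i),\mathbf s_1\otimes\cdots\otimes\mathbf s_m\otimes T\rangle|\le Cn^\varepsilon(\sqrt n)^{k-m-1}\|T\|_{\mathcal U_k}\prod_t\|\mathbf s_t\|_2$. *)

From HB Require Import structures.
From mathcomp Require Import all_boot all_order all_algebra.
From mathcomp Require Import all_classical all_reals.
From mathcomp Require Import measure lebesgue_integral probability exp.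
From mathcomp Require Import complex.
From mathcomp Require Import zify.

Set Implicit Arguments.
Unset Strict Implicit.
Unset Printing Implicit Defensive.

Import Order.TTheory GRing.Theory Num.Theory.
Local Open Scope ring_scope.

Definition mixed_cumulant {d} {Omega : measurableType d} {R : realType}
  (P : probability Omega R) (k : nat) (X : 'I_k -> Omega -> R) : R :=
  \sum_(p : {set {set 'I_k}} | finset.partition p [set: 'I_k])
     (-1) ^+ (#|p|.-1) * ((#|p|.-1)`!)%:R *
     \prod_(B in p) fine ('E_P[fun w => (\prod_(j in B) X j w)%R]).

Definition cumulant_tensor {d} {Omega : measurableType d} {R : realType}
  (P : probability Omega R) (n k : nat) (g : Omega -> 'I_n -> R)
  (alpha : {ffun 'I_k -> 'I_n}) : R :=
  mixed_cumulant P (fun j w => g w (alpha j)).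
Arguments cumulant_tensor {d Omega R} P {n} k g alpha.

Definition tensor (K : Type) (n k : nat) := {ffun 'I_k -> 'I_n} -> K.

(* non-conjugate bilinear scalar product *)
Definition tpair (K : pzRingType) (n k : nat) (A B : tensor K n k) : K :=
  \sum_(a : {ffun 'I_k -> 'I_n}) A a * B a.

Lemma shift_proof (m k : nat) (j : 'I_(k - m)) : (m + j < k)%N.
Proof. case: j => j /= hj; lia. Qed.

Definition shift_ord {m k : nat} (j : 'I_(k - m)) : 'I_k := Ordinal (shift_proof j).

(* s_1 (x) ... (x) s_m (x) T, a tensor of order k (meaningful for m <= k) *)
Definition stens (K : pzRingType) (n k m : nat) (s : 'I_m -> 'I_n -> K)
  (T : tensor K n (k - m)) : tensor K n k :=
  fun a => (\prod_(t < m) oapp (fun j : 'I_k => s t (a j)) 0 (insub (val t)))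
           * T [ffun j => a (@shift_ord m k j)].

Definition rtens (R : pzRingType) (n r : nat) (x : 'I_r -> 'rV[R]_n) : tensor R n r :=
  fun a => \prod_(j < r) x j 0 (a j).

(* ||T||_U = sup_{x_1..x_r in U} |<x_1 (x) .. (x) x_r, T>| ; for r = 0 this is |T| *)
Definition unormR (R : realType) (n r : nat) (U : seq 'rV[R]_n) (T : tensor R n r) : R :=
  \big[Num.max/0]_(c : {ffun 'I_r -> 'I_(size U)})
     `| tpair (rtens (fun j => nth 0 U (c j))) T |.

Definition unormC (R : realType) (n r : nat) (U : seq 'rV[R]_n) (T : tensor R[i] n r) : R :=
  \big[Num.max/0]_(c : {ffun 'I_r -> 'I_(size U)})
     Normc.normc (tpair (fun a => (rtens (fun j => nth 0 U (c j)) a)%:C)%C T).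

Definition l2R (R : realType) (n : nat) (s : 'I_n -> R) : R :=
  Num.sqrt (\sum_(a < n) s a ^+ 2).
Definition l2C (R : realType) (n : nat) (s : 'I_n -> R[i]) : R :=
  Num.sqrt (\sum_(a < n) Normc.normc (s a) ^+ 2).
Definition l2rV (R : realType) (n : nat) (x : 'rV[R]_n) : R :=
  Num.sqrt (\sum_(a < n) x 0 a ^+ 2).

Definition evec (R : pzRingType) (n : nat) (a : 'I_n) : 'rV[R]_n :=
  \row_(b < n) (b == a)%:R.

(* Assumption (C) for a fixed k, constant Ck and deterministic sets    *)
(* U N (one for each N, with n = n N), for the family g N i, i in [N]. *)
Definition assumptionC_k {d} {Omega : measurableType d} {R : realType}
  (P : probability Omega R) (n : nat -> nat)
  (g : forall N : nat, 'I_N -> Omega -> 'I_(n N) -> R)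
  (k : nat) (Ck : R) (U : forall N : nat, seq 'rV[R]_(n N)) : Prop :=
  [/\ 0 < Ck,
      (forall N (a : 'I_(n N)), evec R a \in U N),
      (forall N, (size (undup (U N)))%:R <= ((n N)%:R `^ Ck)%R),
      (forall N x, x \in U N -> l2rV x <= Ck) &
      (forall eps : R, 0 < eps -> exists C : R, 0 < C /\
         forall (N : nat) (i : 'I_N) (m : nat), (1 <= m <= k - 1)%N ->
         forall (s : 'I_m -> 'I_(n N) -> R) (T : tensor R (n N) (k - m)),
           `| tpair (cumulant_tensor P k (g N i)) (stens s T) |
             <= C * ((n N)%:R `^ eps) * Num.sqrt ((n N)%:R) ^+ (k - m - 1)
                * unormR (U N) T * \prod_(t < m) l2R (s t))].

Definition assumptionC {d} {Omega : measurableType d} {R : realType}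
  (P : probability Omega R) (n : nat -> nat)
  (g : forall N : nat, 'I_N -> Omega -> 'I_(n N) -> R) : Prop :=
  forall k : nat, (3 <= k)%N ->
    exists (Ck : R) (U : forall N : nat, seq 'rV[R]_(n N)), assumptionC_k P g k Ck U.

Definition finite_moments {d} {Omega : measurableType d} {R : realType}
  (P : probability Omega R) (n : nat -> nat)
  (g : forall N : nat, 'I_N -> Omega -> 'I_(n N) -> R) : Prop :=
  forall (N : nat) (i : 'I_N) (s : seq 'I_(n N)),
    P.-integrable setT (fun w => (\prod_(a <- s) g N i w a)%:E).

(* For real [s_t] and [T], assumption (C) already covers [1 <= m <= k - 1], with
   one power of [sqrt n] to spare.  For [m = 0], expand [T] along its first index in
   the standard basis [e_b]; since [e_b] lies in [U_k], every slice [T_b] has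
   [|T_b|_U <= |T|_U], and (C) with [m = 1] bounds each of the [n] terms by
   [C n^eps sqrt n ^ (k - 2) |T|_U].  For [m = k], absorb [s_k] into the scalar [T]:
   the order-one tensor [T s_k] has [U_k]-norm at most [C_k |s_k|_2 |T|] by
   Cauchy-Schwarz, and (C) with [m = k - 1] applies.  Complex [s_t] and [T] are split
   into real and imaginary parts, at the cost of a factor [2 ^ (m + 1)]. *)

From HB Require Import structures.
From mathcomp Require Import all_boot all_order all_algebra.
From mathcomp Require Import all_classical all_reals.
From mathcomp Require Import measure lebesgue_integral probability exp.
From mathcomp Require Import complex.
From mathcomp Require Import zify ring lra.

Set Implicit Arguments.
Unset Strict Implicit.
Unset Printing Implicit Defensive.

Import Order.TTheory GRing.Theory Num.Theory.
Local Open Scope ring_scope.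

(* Meant for [K = K'.+1], but defined for every [K] because the tensor orders
   below have the form [k - m]. *)
Definition ffun_cons (A : Type) (K K' : nat) (b : A) (c : {ffun 'I_K' -> A}) :
  {ffun 'I_K -> A} :=
  [ffun j : 'I_K => if val j is j'.+1 then oapp c b (insub j') else b].
Arguments ffun_cons {A K K'}.

Section FfunCons.
Variables (A : Type) (K K' : nat) (b : A) (c : {ffun 'I_K' -> A}).

Lemma ffun_cons0 (j : 'I_K) : val j = 0%N -> ffun_cons b c j = b.
Proof. by rewrite ffunE => ->. Qed.

Lemma ffun_consS (j : 'I_K) (j' : 'I_K') : val j = j'.+1 -> ffun_cons b c j = c j'.
Proof. by rewrite ffunE => ->; rewrite valK. Qed.

End FfunCons.

Lemma sum_ffun_cons (V : nmodType) (A : finType) K K' (eK : K = K'.+1)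
    (G : {ffun 'I_K -> A} -> V) :
  \sum_a G a = \sum_(b : A) \sum_(c : {ffun 'I_K' -> A}) G (ffun_cons b c).
Proof.
subst K; rewrite pair_bigA /=.
rewrite (reindex (fun p : A * {ffun 'I_K' -> A} => ffun_cons p.1 p.2)) //=.
exists (fun a : {ffun 'I_K'.+1 -> A} => (a ord0, [ffun j => a (lift ord0 j)])).
  move=> [b c] _ /=; congr pair; first by rewrite ffun_cons0.
  by apply/ffunP => j; rewrite ffunE (ffun_consS _ _ (j' := j)).
move=> a _ /=; apply/ffunP => -[[|j] hj].
  by rewrite ffun_cons0 //; congr (a _); apply: val_inj.
by rewrite (ffun_consS _ _ (j' := Ordinal (hj : (j < K')%N))) // ffunE;
  congr (a _); apply: val_inj.
Qed.

Lemma prod_ffun_cons (V : comPzSemiRingType) (A B : Type) K K' (eK : K = K'.+1)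
    (H : A -> B -> V) x y (c : {ffun 'I_K' -> A}) (d : {ffun 'I_K' -> B}) :
  \prod_(j < K) H (ffun_cons x c j) (ffun_cons y d j)
    = H x y * \prod_(j < K') H (c j) (d j).
Proof.
subst K; rewrite big_ord_recl !ffun_cons0 //; congr (_ * _).
by apply: eq_bigr => j _; rewrite !(ffun_consS _ _ (j' := j)).
Qed.

Lemma ffun_ord0_eq (A : Type) K (K0 : K = 0%N) (f g : {ffun 'I_K -> A}) : f = g.
Proof. by apply/ffunP => j; have := ltn_ord j; rewrite {2}K0. Qed.

Lemma sum_ffun0 (V : nmodType) (A : finType) (F : {ffun 'I_0 -> A} -> V) f0 :
  \sum_a F a = F f0.
Proof.
rewrite (eq_bigr (fun=> F f0)) => [|a _]; last by rewrite (ffun_ord0_eq erefl a f0).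
by rewrite sumr_const card_ffun !card_ord expn0.
Qed.

Lemma sumr_delta (V : pzSemiRingType) (I : finType) (i0 : I) (F : I -> V) :
  \sum_i (i == i0)%:R * F i = F i0.
Proof.
rewrite (bigD1 i0) //= eqxx mul1r big1 ?addr0 // => i /negbTE ->.
by rewrite mul0r.
Qed.

Definition tslice (K : Type) n k k' (T : tensor K n k) (b : 'I_n) : tensor K n k' :=
  fun c => T (ffun_cons b c).

Lemma tpair_sumr (K : pzRingType) n k (I : finType) (A : tensor K n k)
    (F : I -> tensor K n k) :
  tpair A (fun a => \sum_i F i a) = \sum_i tpair A (F i).
Proof. by rewrite /tpair exchange_big; apply: eq_bigr => a _; rewrite mulr_sumr. Qed.

Lemma tpair_dim0 (K : pzRingType) n k (A B : tensor K n k) :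
  (0 < k)%N -> n = 0%N -> tpair A B = 0.
Proof.
move=> k_gt0 n0; apply: big1 => a _.
by case: (a (Ordinal k_gt0)) => b; rewrite n0.
Qed.

Lemma stensE (K : pzRingType) n k m (mk : (m <= k)%N) (s : 'I_m -> 'I_n -> K)
    (T : tensor K n (k - m)) a :
  stens s T a
    = (\prod_(t < m) s t (a (widen_ord mk t))) * T [ffun j => a (shift_ord j)].
Proof.
congr (_ * _); apply: eq_bigr => t _.
case: insubP => [t' _ t't|]; first by congr (s t (a _)); apply: val_inj.
by rewrite /= (leq_trans (ltn_ord t) mk).
Qed.

Lemma stens_slices (K : pzRingType) n k (k_gt0 : (0 < k)%N) (s : 'I_0 -> 'I_n -> K)
    (T : tensor K n (k - 0)) a :
  stens s T a
    = \sum_b stens (fun (_ : 'I_1) c => (b == c)%:R) (tslice T b : tensor K n (k - 1)) a.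
Proof.
rewrite (stensE (leq0n k)) big_ord0 mul1r.
under eq_bigr do rewrite (stensE k_gt0) big_ord1.
rewrite sumr_delta /tslice; congr (T _).
apply/ffunP => -[[|j] j_lt]; rewrite ffunE.
  by rewrite ffun_cons0 //; congr (a _); apply: val_inj.
have j_lt' : (j < k - 1)%N by lia.
rewrite (ffun_consS _ _ (j' := Ordinal j_lt')) // ffunE.
by congr (a _); apply: val_inj => /=; lia.
Qed.

Lemma stens_absorb_last (K : pzRingType) n m (s : 'I_m.+1 -> 'I_n -> K)
    (T : tensor K n (m.+1 - m.+1)) (z : 'I_(m.+1 - m)) f0 a :
  stens s T a
    = stens (fun t : 'I_m => s (widen_ord (leqnSn m) t)) (fun c => s ord_max (c z) * T f0) a.
Proof.
rewrite (stensE (leqnn m.+1)) (stensE (leqnSn m)) big_ord_recr /= ffunE mulrA.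
have widen_id (t : 'I_m.+1) : widen_ord (leqnn m.+1) t = t by apply: val_inj.
congr (_ * _ * _).
- by apply: eq_bigr => t _; rewrite widen_id.
- rewrite widen_id; congr (s _ (a _)); apply: val_inj => /=.
  by have := ltn_ord z; lia.
- by apply: f_equal; apply: ffun_ord0_eq; exact: subnn.
Qed.

Lemma l2R_ge0 (R : realType) n (s : 'I_n -> R) : 0 <= l2R s.
Proof. exact: sqrtr_ge0. Qed.

Lemma prod_l2R_ge0 (R : realType) n m (s : 'I_m -> 'I_n -> R) :
  0 <= \prod_(t < m) l2R (s t).
Proof. by apply: prodr_ge0 => t _; exact: l2R_ge0. Qed.

Lemma prod_l2C_ge0 (R : realType) n m (s : 'I_m -> 'I_n -> R[i]) :
  0 <= \prod_(t < m) l2C (s t).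
Proof. by apply: prodr_ge0 => t _; exact: sqrtr_ge0. Qed.

Lemma unormC_ge0 (R : realType) n r (U : seq 'rV[R]_n) (T : tensor R[i] n r) :
  0 <= unormC U T.
Proof. exact: bigmax_ge_id. Qed.

Lemma l2R_delta (R : realType) n (b : 'I_n) : l2R (fun c => (b == c)%:R : R) = 1.
Proof.
rewrite /l2R (eq_bigr (fun c => (c == b)%:R * 1)) ?sumr_delta ?sqrtr1 // => c _.
by rewrite eq_sym mulr1; case: (c == b); rewrite ?expr1n ?expr0n.
Qed.

Lemma ler_abs_dot_l2R (R : realType) n (u v : 'I_n -> R) :
  `|\sum_a u a * v a| <= l2R u * l2R v.
Proof.
have sumsq_ge0 (w : 'I_n -> R) : 0 <= \sum_a w a ^+ 2.
  by apply: sumr_ge0 => a _; exact: sqr_ge0.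
rewrite /l2R -sqrtrM // -sqrtr_sqr ler_sqrt ?mulr_ge0 // -subr_ge0.
have lagrange : \sum_a \sum_b (u a * v b - u b * v a) ^+ 2 =
    2 * ((\sum_a u a ^+ 2) * (\sum_b v b ^+ 2) - (\sum_a u a * v a) ^+ 2).
  have swap : \sum_a \sum_b u a ^+ 2 * v b ^+ 2 = \sum_a \sum_b u b ^+ 2 * v a ^+ 2.
    exact: exchange_big.
  rewrite expr2 !big_distrlr /= mulrBr mulr2n mulrDl mul1r {2}swap.
  rewrite -big_split /= mulr_sumr -sumrB; apply: eq_bigr => a _.
  rewrite -big_split /= mulr_sumr -sumrB; apply: eq_bigr => b _.
  ring.
rewrite -(pmulr_rge0 _ (ltr0n _ 2)) -lagrange.
by apply: sumr_ge0 => a _; apply: sumr_ge0 => b _; exact: sqr_ge0.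
Qed.

Section UNorm.
Variables (R : realType) (n : nat) (U : seq 'rV[R]_n).

Lemma unormR_ge0 r (T : tensor R n r) : 0 <= unormR U T.
Proof. exact: bigmax_ge_id. Qed.

Lemma unormR_tslice K K' (eK : K = K'.+1) (T : tensor R n K) (b : 'I_n) :
  evec R b \in U -> unormR U (tslice T b : tensor R n K') <= unormR U T.
Proof.
move=> Ub; apply: bigmax_le => [|c _]; first exact: unormR_ge0.
have ib_lt : (index (evec R b) U < size U)%N by rewrite index_mem.
pose ib : 'I_(size U) := Ordinal ib_lt.
have U_ib : nth 0 U ib = evec R b by rewrite /= nth_index.
pose U_entry (i : 'I_(size U)) (x : 'I_n) := nth 0 U i 0 x.
apply: le_trans (le_bigmax _ _ (ffun_cons ib c)); rewrite le_eqVlt; apply/orP; left.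
rewrite /tpair (sum_ffun_cons eK) (bigD1 b) //= [X in _ + X]big1 ?addr0 => [|b' b'b].
  apply/eqP; congr `|_|; apply: eq_bigr => d _.
  by rewrite /rtens (prod_ffun_cons eK U_entry) /U_entry U_ib mxE eqxx mul1r.
apply: big1 => d _.
by rewrite /rtens (prod_ffun_cons eK U_entry) /U_entry U_ib mxE (negbTE b'b) !mul0r.
Qed.

Lemma unormR_scalar K (K0 : K = 0%N) (T : tensor R n K) (i0 : 'I_(size U)) f0 :
  `|T f0| <= unormR U T.
Proof.
subst K; apply: le_trans (le_bigmax _ _ [ffun => i0]).
by rewrite /tpair (sum_ffun0 _ f0) /rtens big_ord0 mul1r.
Qed.

Variable Ck : R.
Hypothesis U_l2_le : forall x, x \in U -> l2rV x <= Ck.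

Lemma unormR_rank_one K (K1 : K = 1%N) (v : 'I_n -> R) (t0 : R) (z : 'I_K) :
  0 <= Ck -> unormR U (fun c => v (c z) * t0) <= Ck * l2R v * `|t0|.
Proof.
move=> Ck_ge0; subst K.
apply: bigmax_le => [|c _]; first by rewrite !mulr_ge0 // l2R_ge0.
have -> : z = ord0 by apply: val_inj; case: z => -[].
rewrite /tpair (sum_ffun_cons (K' := 0) erefl).
set u := nth 0 U (c ord0).
rewrite (eq_bigr (fun b => u 0 b * v b * t0)) => [|b _]; last first.
  by rewrite (sum_ffun0 _ [ffun => b]) /rtens big_ord1 !ffun_cons0 // mulrA.
rewrite -mulr_suml normrM ler_wpM2r //.
apply: le_trans (ler_abs_dot_l2R _ _) _; rewrite ler_wpM2r ?l2R_ge0 //.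
by apply: U_l2_le; rewrite mem_nth.
Qed.

End UNorm.

Section RealBound.
Variables (R : realType) (n k : nat) (kap : tensor R n k) (U : seq 'rV[R]_n) (Ck B : R).
Hypotheses (B_ge0 : 0 <= B) (Ck_ge0 : 0 <= Ck).
Hypothesis evec_in_U : forall a : 'I_n, evec R a \in U.
Hypothesis U_l2_le : forall x, x \in U -> l2rV x <= Ck.
Hypothesis kap_bound : forall m, (1 <= m <= k - 1)%N ->
  forall (s : 'I_m -> 'I_n -> R) (T : tensor R n (k - m)),
    `|tpair kap (stens s T)|
      <= B * Num.sqrt (n%:R) ^+ (k - m - 1) * unormR U T * \prod_(t < m) l2R (s t).

Local Notation sqrtn := (Num.sqrt (n%:R : R)).

Lemma kap_bound_tensor : (1 < k)%N ->
  forall (s : 'I_0 -> 'I_n -> R) (T : tensor R n (k - 0)),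
    `|tpair kap (stens s T)| <= B * sqrtn ^+ k * unormR U T.
Proof.
move=> k_gt1 s T; have k_gt0 : (0 < k)%N by lia.
have -> : stens s T = fun a =>
    \sum_b stens (fun (_ : 'I_1) c => (b == c)%:R) (tslice T b : tensor R n (k - 1)) a.
  by apply: funext => a; exact: stens_slices.
rewrite tpair_sumr; apply: le_trans (ler_norm_sum _ _ _) _.
have slice_bound b : `|tpair kap (stens (fun (_ : 'I_1) c => (b == c)%:R) (tslice T b))|
    <= B * sqrtn ^+ (k - 2) * unormR U T.
  apply: le_trans (kap_bound _ _ _) _; first lia.
  rewrite big_ord1 l2R_delta mulr1 -subnDA ler_wpM2l ?mulr_ge0 ?exprn_ge0 ?sqrtr_ge0 //.
  by apply: unormR_tslice; [lia | exact: evec_in_U].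
apply: le_trans (ler_sum _ (fun b _ => slice_bound b)) _.
have sqrt_pow : sqrtn ^+ k = sqrtn ^+ (k - 2) * n%:R.
  by rewrite -{1}(subnK k_gt1) exprD sqr_sqrtr ?ler0n.
rewrite sumr_const card_ord sqrt_pow -mulr_natr; lra.
Qed.

Lemma kap_bound_scalar : (1 < k)%N -> (0 < n)%N ->
  forall (s : 'I_k -> 'I_n -> R) (T : tensor R n (k - k)),
    `|tpair kap (stens s T)| <= B * Ck * unormR U T * \prod_(t < k) l2R (s t).
Proof.
case: k kap kap_bound => [//|m] kap' kap_bound' m_gt0 n_gt0 s T.
have z_lt : (0 < m.+1 - m)%N by rewrite subSnn.
pose z : 'I_(m.+1 - m) := Ordinal z_lt.
pose f0 : {ffun 'I_(m.+1 - m.+1) -> 'I_n} := [ffun => Ordinal n_gt0].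
pose s' t := s (widen_ord (leqnSn m) t).
have -> : stens s T = stens s' (fun c => s ord_max (c z) * T f0).
  by apply: funext => a; exact: stens_absorb_last.
apply: le_trans (kap_bound' m _ s' _) _; first lia.
rewrite (_ : (m.+1 - m - 1 = 0)%N) ?expr0 ?mulr1; last by lia.
have i0_lt : (index (evec R (Ordinal n_gt0)) U < size U)%N by rewrite index_mem.
have T_le := unormR_scalar (subnn m.+1) T (Ordinal i0_lt) f0.
have sT_le := unormR_rank_one U_l2_le (subSnn m) (s ord_max) (T f0) z Ck_ge0.
apply: (@le_trans _ _ (B * (Ck * l2R (s ord_max) * unormR U T) * \prod_(t < m) l2R (s' t))).
  rewrite ler_wpM2r ?prod_l2R_ge0 // ler_wpM2l //; apply: le_trans sT_le _.
  by rewrite ler_wpM2l // mulr_ge0 // l2R_ge0.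
by rewrite big_ord_recr /=; lra.
Qed.

Lemma real_cumulant_bound : (1 < k)%N ->
  forall m, (m <= k)%N -> forall (s : 'I_m -> 'I_n -> R) (T : tensor R n (k - m)),
    `|tpair kap (stens s T)|
      <= B * (1 + Ck) * sqrtn ^+ (k - m) * unormR U T * \prod_(t < m) l2R (s t).
Proof.
move=> k_gt1 m mk s T.
have RHS_ge0 : 0 <= B * (1 + Ck) * sqrtn ^+ (k - m) * unormR U T * \prod_(t < m) l2R (s t).
  by rewrite !mulr_ge0 ?addr_ge0 ?exprn_ge0 ?sqrtr_ge0 ?unormR_ge0 ?prod_l2R_ge0.
have [n0|n_gt0] := posnP n; first by rewrite tpair_dim0 ?normr0 //; lia.
have B_le : B <= B * (1 + Ck) by rewrite ler_peMr // lerDl.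
case: m mk s T {RHS_ge0} => [|m] mk s T.
  rewrite big_ord0 mulr1 [in _ ^+ (k - 0)]subn0.
  apply: le_trans (kap_bound_tensor k_gt1 s T) _.
  by rewrite ler_wpM2r ?unormR_ge0 // ler_wpM2r ?exprn_ge0 ?sqrtr_ge0.
case: (ltngtP m.+1 k) mk => // [m_lt _|m_eq _].
  apply: le_trans (kap_bound _ _ _) _; first lia.
  rewrite ler_wpM2r ?prod_l2R_ge0 // ler_wpM2r ?unormR_ge0 //.
  rewrite ler_pM ?mulr_ge0 ?exprn_ge0 ?sqrtr_ge0 //.
  by rewrite ler_weXn2l ?leq_subr // -[X in X <= _]sqrtr1 ler_sqrt ?ler1n.
move: s T; rewrite m_eq => s T; rewrite [in _ ^+ (k - k)]subnn expr0 mulr1.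
apply: le_trans (kap_bound_scalar k_gt1 n_gt0 s T) _.
by rewrite ler_wpM2r ?prod_l2R_ge0 // ler_wpM2r ?unormR_ge0 // ler_wpM2l // lerDr.
Qed.

End RealBound.

Section ComplexParts.
Variable R : realType.
Implicit Types (b : bool) (z : R[i]).

Definition reim b z : R := if b then complex.Im z else complex.Re z.
Definition iunit b : R[i] := if b then 'i%C else 1.

Lemma complex_reim z : z = \sum_b iunit b * (reim b z)%:C%C.
Proof. by rewrite big_bool /= mul1r addrC -complexE. Qed.

Lemma normc_iunit b : Normc.normc (iunit b) = 1.
Proof. by case: b; rewrite /= expr0n /= ?add0r ?addr0 expr1n sqrtr1. Qed.

Lemma reim_sum b (I : finType) (F : I -> R[i]) : reim b (\sum_i F i) = \sum_i reim b (F i).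
Proof.
by case: b; [exact: (raddf_sum (@complex.Im R : Rcomplex R -> R))
            | exact: (raddf_sum (@complex.Re R : Rcomplex R -> R))].
Qed.

Lemma reim_realM b (r : R) z : reim b (r%:C%C * z) = r * reim b z.
Proof. by case: b; case: z => x y /=; rewrite mul0r ?addr0 ?subr0. Qed.

Lemma sqr_reim_le b z : reim b z ^+ 2 <= Normc.normc z ^+ 2.
Proof.
case: z => x y; rewrite /= sqr_sqrtr ?addr_ge0 ?sqr_ge0 //.
by case: b; rewrite ?lerDl ?lerDr sqr_ge0.
Qed.

Lemma abs_reim_le b z : `|reim b z| <= Normc.normc z.
Proof.
have normc_ge0 : 0 <= Normc.normc z by case: z => x y; exact: sqrtr_ge0.
by rewrite -ler_sqr ?nnegrE //= real_normK ?num_real // sqr_reim_le.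
Qed.

Lemma l2R_reim b n (s : 'I_n -> R[i]) : l2R (fun c => reim b (s c)) <= l2C s.
Proof.
by rewrite ler_sqrt; [apply: ler_sum => c _; exact: sqr_reim_le
                     | apply: sumr_ge0 => c _; exact: sqr_ge0].
Qed.

Lemma unormR_reim b n r (U : seq 'rV[R]_n) (T : tensor R[i] n r) :
  unormR U (fun a => reim b (T a)) <= unormC U T.
Proof.
apply: bigmax_le => [|c _]; first exact: bigmax_ge_id.
apply: le_trans (le_bigmax _ _ c); apply: le_trans (abs_reim_le b _).
by rewrite /tpair reim_sum; under [X in _ <= `|X|]eq_bigr do rewrite reim_realM.
Qed.

End ComplexParts.

Lemma normc_real (R : realType) (r : R) : Normc.normc r%:C%C = `|r|.
Proof. by rewrite /= expr0n addr0 sqrtr_sqr. Qed.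

Lemma normc_sum (R : realType) (I : finType) (F : I -> R[i]) :
  Normc.normc (\sum_i F i) <= \sum_i Normc.normc (F i).
Proof. exact: (@ler_norm_sum _ (Rcomplex R)). Qed.

Lemma normc_prod_iunit (R : realType) m (f : {ffun 'I_m -> bool}) :
  Normc.normc (\prod_(t < m) iunit R (f t)) = 1.
Proof.
rewrite (big_morph _ (@Normc.normcM R) (@Normc.normc1 R)).
by apply: big1 => t _; exact: normc_iunit.
Qed.

Section ComplexBound.
Variables (R : realType) (n k m : nat) (kap : tensor R n k) (U : seq 'rV[R]_n).
Hypothesis mk : (m <= k)%N.

Lemma tpair_stens_reim (s : 'I_m -> 'I_n -> R[i]) (T : tensor R[i] n (k - m)) :
  tpair (fun a => (kap a)%:C%C) (stens s T)
    = \sum_(f : {ffun 'I_m -> bool}) \sum_(b : bool)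
        (\prod_(t < m) iunit R (f t)) * iunit R b
        * (tpair kap (stens (fun t c => reim (f t) (s t c)) (fun a => reim b (T a))))%:C%C.
Proof.
have stens_reim a : stens s T a
    = \sum_(f : {ffun 'I_m -> bool}) \sum_(b : bool) (\prod_(t < m) iunit R (f t)) * iunit R b
        * (stens (fun t c => reim (f t) (s t c)) (fun a => reim b (T a)) a)%:C%C.
  rewrite (stensE mk) (eq_bigr _ (fun t _ => complex_reim (s t _))) bigA_distr_bigA.
  rewrite [T _]complex_reim mulr_suml; apply: eq_bigr => f _.
  rewrite mulr_sumr; apply: eq_bigr => b _.
  by rewrite big_split /= (stensE mk) rmorphM rmorph_prod /=; ring.
rewrite (funext stens_reim).
rewrite tpair_sumr; apply: eq_bigr => f _; rewrite tpair_sumr; apply: eq_bigr => b _.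
rewrite /tpair rmorph_sum mulr_sumr; apply: eq_bigr => a _.
by rewrite [in RHS]rmorphM mulrCA.
Qed.

Lemma complex_pairing_bound (K : R) : 0 <= K ->
  (forall (s : 'I_m -> 'I_n -> R) (T : tensor R n (k - m)),
     `|tpair kap (stens s T)| <= K * unormR U T * \prod_(t < m) l2R (s t)) ->
  forall (s : 'I_m -> 'I_n -> R[i]) (T : tensor R[i] n (k - m)),
    Normc.normc (tpair (fun a => (kap a)%:C%C) (stens s T))
      <= 2 ^+ m.+1 * K * unormC U T * \prod_(t < m) l2C (s t).
Proof.
move=> K_ge0 real_bound s T; rewrite tpair_stens_reim.
set bound := K * unormC U T * \prod_(t < m) l2C (s t).
apply: (@le_trans _ _ (\sum_(f : {ffun 'I_m -> bool}) \sum_(b : bool) bound)).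
  apply: le_trans (normc_sum _) _; apply: ler_sum => f _.
  apply: le_trans (normc_sum _) _; apply: ler_sum => b _.
  rewrite !Normc.normcM normc_prod_iunit normc_iunit normc_real !mul1r.
  apply: le_trans (real_bound _ _) _; apply: ler_pM.
  - by rewrite mulr_ge0 ?unormR_ge0.
  - exact: prod_l2R_ge0.
  - by rewrite ler_wpM2l ?unormR_reim.
  - by apply: ler_prod => t _; rewrite l2R_ge0 l2R_reim.
rewrite !sumr_const card_ffun card_bool card_ord -mulrnA -expnS.
by rewrite -[X in X <= _]mulr_natl natrX /bound !mulrA.
Qed.

End ComplexBound.

Theorem lemma3p14 (d : measure_display) (Omega : measurableType d) (R : realType)
  (P : probability Omega R) (n : nat -> nat)
  (g : forall N : nat, 'I_N -> Omega -> 'I_(n N) -> R) :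
  finite_moments P g ->
  assumptionC P g ->
  forall (k : nat), (3 <= k)%N ->
  forall (Ck : R) (U : forall N : nat, seq 'rV[R]_(n N)),
    assumptionC_k P g k Ck U ->
  forall eps : R, 0 < eps -> exists C : R, 0 < C /\
    forall (N : nat) (i : 'I_N) (m : nat), (m <= k)%N ->
    forall (s : 'I_m -> 'I_(n N) -> R[i]) (T : tensor R[i] (n N) (k - m)),
      Normc.normc (tpair (fun a => (cumulant_tensor P k (g N i) a)%:C)%C (stens s T))
        <= C * ((n N)%:R `^ eps) * Num.sqrt ((n N)%:R) ^+ (k - m)
           * unormC (U N) T * \prod_(t < m) l2C (s t).
Proof.
move=> _ _ k k_ge3 Ck U [Ck_gt0 evec_in_U _ U_l2_le cumulant_bound] eps eps_gt0.
have [C [C_gt0 C_bound]] := cumulant_bound eps eps_gt0.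
exists (2 ^+ k.+1 * (C * (1 + Ck))); split.
  by rewrite !mulr_gt0 ?exprn_gt0 ?addr_gt0 ?ltr01.
move=> N i m mk s T.
have B_ge0 : 0 <= C * (n N)%:R `^ eps by rewrite mulr_ge0 ?powR_ge0 ?ltW.
have K_ge0 : 0 <= C * (n N)%:R `^ eps * (1 + Ck) * Num.sqrt (n N)%:R ^+ (k - m).
  by rewrite !mulr_ge0 ?addr_ge0 ?exprn_ge0 ?sqrtr_ge0 ?powR_ge0 ?ltW.
have real_bound := real_cumulant_bound B_ge0 (ltW Ck_gt0) (@evec_in_U N)
  (@U_l2_le N) (C_bound N i) (ltnW k_ge3) mk.
apply: le_trans (complex_pairing_bound mk K_ge0 real_bound s T) _.
have two_pow : (2 : R) ^+ m.+1 <= 2 ^+ k.+1 by rewrite ler_eXn2l ?ltr1n.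
rewrite -!mulrA [in X in _ <= X](mulrCA (1 + Ck)) ler_wpM2r //.
by rewrite !mulr_ge0 ?addr_ge0 ?exprn_ge0 ?sqrtr_ge0 ?unormC_ge0 ?prod_l2C_ge0 ?powR_ge0 ?ltW.
Qed.
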